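(* Let $n\ge 1$ and $k\ge 2$ be integers and let $f:\{0,1,\ldots,k-1\}^n\to\mathbb{R}$ be integer submodular, i.e. $f(\mathbf{x})+f(\mathbf{y})\ge f(\mathbf{x}\vee\mathbf{y})+f(\mathbf{x}\wedge\mathbf{y})$ for all $\mathbf{x},\mathbf{y}\in\{0,\ldots,k-1\}^n$, where $\vee,\wedge$ are the componentwise maximum and minimum. Let $F$ be the generalized multilinear extension of $f$ (defined in the context). Then: (1) If $f$ is monotone (i.e. $\mathbf{x}\le\mathbf{y}$ componentwise implies $f(\mathbf{x})\le f(\mathbf{y})$), then $\frac{\partial F}{\partial \rho_{ij}}\ge 0$ for all $i\in\{1,\ldots,n\}$ and $j\in\{1,\ldots,k-1\}$. (2) $F$ is DR-submodular, i.e. $\frac{\partial^2 F}{\partial \rho_{ij}\,\partial \rho_{i'l}}\le 0$ for all $i,i'\in\{1,\ldots,n\}$ and $j,l\in\{1,\ldots,k-1\}$ (this holds even if $f$ itself is not DR-submodular).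
   Context: For $\bm{\rho}_i=(\rho_{i1},\ldots,\rho_{i,k-1})$ define the simplex $\Delta^{k-1}=\{\bm{\rho}_i\in\mathbb{R}^{k-1}:\rho_{i1}+\cdots+\rho_{i,k-1}\le 1,\ \rho_{ij}\ge 0\}$, and let $\bm{\rho}=[\bm{\rho}_1;\ldots;\bm{\rho}_n]\in\Delta^{k-1}_n:=(\Delta^{k-1})^n$. Each $\bm{\rho}_i$ parametrizes a categorical distribution on $\{0,1,\ldots,k-1\}$ giving value $j\ge1$ probability $\rho_{ij}$ and value $0$ probability $1-\sum_{j=1}^{k-1}\rho_{ij}$. The generalized multilinear extension is $F(\bm{\rho})=\mathbb{E}[f(R(\bm{\rho}))]$, where $R(\bm{\rho})\in\{0,\ldots,k-1\}^n$ has independent coordinates, the $i$-th distributed according to $\bm{\rho}_i$. Explicitly $F(\bm{\rho})=\sum_{\mathbf{x}\in\{0,\ldots,k-1\}^n} f(\mathbf{x})\prod_{i=1}^n p_i(x_i)$ with $p_i(j)=\rho_{ij}$ for $j\ge1$ and $p_i(0)=1-\sum_{j}\rho_{ij}$; this is a polynomial in the variables $\rho_{ij}$, and its partial derivatives are those of this polynomial. *)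

From HB Require Import structures.
From mathcomp Require Import all_boot all_order all_algebra.
From mathcomp Require Import all_classical all_reals all_analysis.
Set Implicit Arguments. Unset Strict Implicit. Unset Printing Implicit Defensive.
Import Order.TTheory GRing.Theory Num.Theory.
Import numFieldNormedType.Exports.
Local Open Scope ring_scope.

Definition lattice_pt (n k : nat) := {ffun 'I_n -> 'I_k}.

Definition pt_join n k (x y : lattice_pt n k) : lattice_pt n k :=
  [ffun i => if (x i <= y i)%N then y i else x i].
Definition pt_meet n k (x y : lattice_pt n k) : lattice_pt n k :=
  [ffun i => if (x i <= y i)%N then x i else y i].
Definition pt_le n k (x y : lattice_pt n k) : Prop := forall i, (x i <= y i)%N.

Definition integer_submodular (R : realType) n k (f : lattice_pt n k -> R) : Prop :=
  forall x y, f (pt_join x y) + f (pt_meet x y) <= f x + f y.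

Definition monotone_fn (R : realType) n k (f : lattice_pt n k -> R) : Prop :=
  forall x y, pt_le x y -> f x <= f y.

(* rho : n x (k-1) matrix; column j (0-based) stands for rho_{i,j+1}.
   Probability that coordinate i takes value a. *)
Definition catprob (R : realType) n k (rho : 'M[R]_(n, k.-1)) (i : 'I_n) (a : 'I_k) : R :=
  if (a == 0 :> nat) then 1 - \sum_(j < k.-1) rho i j
  else \sum_(j < k.-1 | (j.+1 == a :> nat)) rho i j.

Definition in_simplex_n (R : realType) n k (rho : 'M[R]_(n, k.-1)) : Prop :=
  forall i, (forall j, 0 <= rho i j) /\ \sum_(j < k.-1) rho i j <= 1.

(* Generalized multilinear extension, as a polynomial function on all of R^{n(k-1)} *)
Definition gme (R : realType) n k (f : lattice_pt n k -> R) (rho : 'M[R]_(n, k.-1)) : R :=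
  \sum_(x : lattice_pt n k) f x * \prod_(i < n) catprob rho i (x i).

Definition edir (R : realType) n m (i : 'I_n) (j : 'I_m) : 'M[R]_(n, m) := delta_mx i j.
Arguments edir {R n m}.

(* Moving rho along the coordinate direction of rho_ij changes only the factor
   p_i(x_i) of each term of F, and affinely, with slope [x_i = j] - [x_i = 0].
   Hence dF/drho_ij is again a multilinear extension, over the coordinates other
   than i, of f weighted by that slope; pairing each x with x_i = 0 with x[i := j]
   turns it into the expectation of [x_i = 0] (f(x[i := j]) - f(x)), which is
   nonnegative when f is monotone.  Differentiating once more along rho_i'l with
   i' <> i and pairing again gives the expectation of
   [x_i = x_i' = 0] (f(x[i := j, i' := l]) - f(x[i := j]) - f(x[i' := l]) + f(x)),
   nonpositive by submodularity because x[i := j] and x[i' := l] have join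
   x[i := j, i' := l] and meet x.  For i' = i the second derivative vanishes:
   dF/drho_ij no longer depends on the row rho_i. *)

From HB Require Import structures.
From mathcomp Require Import all_boot all_order all_algebra perm.
From mathcomp Require Import all_classical all_reals all_analysis.
From mathcomp Require Import ring lra.
Import Order.TTheory GRing.Theory Num.Theory.
Import numFieldNormedType.Exports.
Set Implicit Arguments. Unset Strict Implicit. Unset Printing Implicit Defensive.
Local Open Scope ring_scope.

Definition pt_set n k (x : lattice_pt n k) (i : 'I_n) (v : 'I_k) : lattice_pt n k :=
  [ffun t => if t == i then v else x t].

Section Lattice.
Variables n k : nat.
Implicit Types (x : lattice_pt n k) (i t : 'I_n) (a b v : 'I_k).

Lemma pt_set_eq x i v : pt_set x i v i = v.
Proof. by rewrite ffunE eqxx. Qed.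

Lemma pt_set_neq x i v t : t != i -> pt_set x i v t = x t.
Proof. by rewrite ffunE => /negbTE ->. Qed.

Lemma pt_set_id x i : pt_set x i (x i) = x.
Proof. by apply/ffunP => t; rewrite ffunE; case: eqP => [->|]. Qed.

Lemma pt_set_set x i v w : pt_set (pt_set x i v) i w = pt_set x i w.
Proof. by apply/ffunP => t; rewrite !ffunE; case: eqP. Qed.

Lemma le_pt_set x i v : (x i <= v)%N -> pt_le x (pt_set x i v).
Proof. by move=> le_xv t; rewrite ffunE; case: eqP => [->|]. Qed.

Lemma sum_pt_set (V : nmodType) i a b (g : lattice_pt n k -> V) :
  \sum_(x : lattice_pt n k | x i == a) g x =
  \sum_(x : lattice_pt n k | x i == b) g (pt_set x i a).
Proof.
pose s x := pt_set x i (tperm a b (x i)).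
have sK : involutive s by move=> x; rewrite /s pt_set_set pt_set_eq tpermK pt_set_id.
have sE x : (s x i == a) = (x i == b).
  by rewrite pt_set_eq -[X in _ == X](tpermR a b) (can_eq (tpermK a b)).
rewrite (reindex_inj (can_inj sK)); apply: eq_big => [x|x]; first exact: sE.
by rewrite sE => /eqP xb; rewrite /s xb tpermR.
Qed.

Lemma submodular_square (R : realType) (f : lattice_pt n k -> R) x i i' a b :
  integer_submodular f -> i != i' -> (x i <= a)%N -> (x i' <= b)%N ->
  f (pt_set (pt_set x i a) i' b) + f x <= f (pt_set x i a) + f (pt_set x i' b).
Proof.
move=> hsub ii' le_xa le_xb; have := hsub (pt_set x i a) (pt_set x i' b).
have eq_le (u v : 'I_k) : (u <= v)%N -> (v <= u)%N -> v = u.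
  by move=> uv vu; apply/val_inj/anti_leq; rewrite uv vu.
have -> : pt_join (pt_set x i a) (pt_set x i' b) = pt_set (pt_set x i a) i' b.
  apply/ffunP => t; rewrite !ffunE.
  case: (eqVneq t i') => [->|_]; first by rewrite eq_sym (negbTE ii') le_xb.
  by case: (eqVneq t i) => [->|_]; rewrite ?leqnn //; case: leqP => // /eq_le ->.
have -> // : pt_meet (pt_set x i a) (pt_set x i' b) = x.
  apply/ffunP => t; rewrite !ffunE.
  case: (eqVneq t i') => [->|_]; first by rewrite eq_sym (negbTE ii') le_xb.
  by case: (eqVneq t i) => [->|_]; rewrite ?leqnn //; case: leqP => // /eq_le ->.
Qed.

End Lattice.

Lemma derive_affine (R : numFieldType) (V W : normedModType R) (F : V -> W) a v c :
  (forall h : R, F (h *: v + a) = F a + h *: c) -> 'D_v F a = c.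
Proof.
move=> Fa; apply: lim_near_cst => //; near=> h.
have h0 : h != 0 by near: h; exact: nbhs_dnbhs_neq.
by rewrite /= Fa addrC addKr scalerA mulVf // scale1r.
Unshelve. all: by end_near. Qed.

Section MultilinearExtension.
Variables (R : realType) (n m : nat).
Local Notation pt := (lattice_pt n m.+1).
(* [m.+1.-1] rather than [m] lets [catprob] and [in_simplex_n] infer k = m.+1. *)
Implicit Types (rho : 'M[R]_(n, m.+1.-1)) (S : {set 'I_n}) (w : pt -> R) (x : pt).

Definition dcatprob (l : 'I_m) (a : 'I_m.+1) : R := (a == lift ord0 l)%:R - (a == ord0)%:R.

Definition prob_on S rho x : R := \prod_(t in S) catprob rho t (x t).

Definition gme_on S w rho : R := \sum_(x : pt) w x * prob_on S rho x.

Lemma eq_gme_on S w1 w2 : w1 =1 w2 -> gme_on S w1 = gme_on S w2.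
Proof. by move=> w12; apply: funext => rho; apply: eq_bigr => x _; rewrite w12. Qed.

Lemma gme_gme_on (f : pt -> R) : gme f = gme_on [set: 'I_n] f.
Proof.
apply: funext => rho; apply: eq_bigr => x _.
by rewrite /prob_on; under [in RHS]eq_bigl do rewrite inE.
Qed.

Lemma catprobE rho t a :
  catprob rho t a = (a == ord0)%:R + \sum_l rho t l * dcatprob l a.
Proof.
rewrite /catprob /dcatprob -[a == 0 :> nat]/(a == ord0).
have [->|a0] := eqVneq a ord0.
  by rewrite -sumrN; congr (_ + _); apply: eq_bigr => l _ /=; ring.
rewrite big_mkcond.
have -> : \sum_(l < m) (if l.+1 == a then rho t l else 0) =
          \sum_l rho t l * (a == lift ord0 l)%:R.
  by apply: eq_bigr => l _; rewrite mulr_natr mulrb eq_sym.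
by rewrite -[LHS]add0r; congr (_ + _); apply: eq_bigr => l _; rewrite mulr0n subr0.
Qed.

Lemma catprob_shift rho h i l t a :
  catprob (h *: edir i l + rho) t a =
  catprob rho t a + (t == i)%:R * h * dcatprob l a.
Proof.
rewrite !catprobE -addrA; congr (_ + _).
under eq_bigr do rewrite !mxE mulrDl.
rewrite big_split /= addrC; congr (_ + _).
rewrite (bigD1 l) //= big1 ?addr0 => [|j /negbTE jl]; last by rewrite jl andbF mulr0 mul0r.
by rewrite eqxx andbT [h * _]mulrC.
Qed.

Lemma gme_on_shift_mem S w rho h i l : i \in S ->
  gme_on S w (h *: edir i l + rho) =
  gme_on S w rho + h * gme_on (S :\ i) (fun x => w x * dcatprob l (x i)) rho.
Proof.
move=> iS; rewrite /gme_on /prob_on mulr_sumr -big_split; apply: eq_bigr => x _ /=.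
rewrite !(big_setD1 i iS) /= catprob_shift eqxx mul1r.
rewrite (eq_bigr (fun t => catprob rho t (x t))) => [|t]; first ring.
by rewrite !inE catprob_shift => /andP[/negbTE -> _]; rewrite !mul0r addr0.
Qed.

Lemma gme_on_shift_notin S w rho h i l : i \notin S ->
  gme_on S w (h *: edir i l + rho) = gme_on S w rho.
Proof.
move=> iS; apply: eq_bigr => x _; congr (_ * _); apply: eq_bigr => t tS.
have /negbTE ti : t != i by apply: contraNneq iS => <-.
by rewrite catprob_shift ti !mul0r addr0.
Qed.

Lemma derive_gme_on_mem S w rho i l : i \in S ->
  'D_(edir i l) (gme_on S w) rho =
  gme_on (S :\ i) (fun x => w x * dcatprob l (x i)) rho.
Proof. by move=> iS; apply: derive_affine => h; rewrite gme_on_shift_mem. Qed.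

Lemma derive_gme_on_notin S w rho i l : i \notin S ->
  'D_(edir i l) (gme_on S w) rho = 0.
Proof.
by move=> iS; apply: derive_affine => h; rewrite gme_on_shift_notin // scaler0 addr0.
Qed.

Lemma catprob_ge0 rho t a : in_simplex_n rho -> 0 <= catprob rho t a.
Proof.
case/(_ t) => rho_ge0 rho_le1; rewrite /catprob; case: ifP => _.
  by rewrite subr_ge0.
by apply: sumr_ge0 => j _.
Qed.

Lemma prob_on_ge0 S rho x : in_simplex_n rho -> 0 <= prob_on S rho x.
Proof. by move=> hrho; apply: prodr_ge0 => t _; exact: catprob_ge0. Qed.

Lemma prob_on_pt_set S rho x i v :
  i \notin S -> prob_on S rho (pt_set x i v) = prob_on S rho x.
Proof.
move=> iS; apply: eq_bigr => t tS; rewrite pt_set_neq //.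
by apply: contraNneq iS => <-.
Qed.

Lemma gme_on_ge0 S w rho : in_simplex_n rho -> (forall x, 0 <= w x) -> 0 <= gme_on S w rho.
Proof. by move=> hrho w_ge0; apply: sumr_ge0 => x _; rewrite mulr_ge0 ?prob_on_ge0. Qed.

Lemma gme_on_le0 S w rho : in_simplex_n rho -> (forall x, w x <= 0) -> gme_on S w rho <= 0.
Proof. by move=> hrho w_le0; apply: sumr_le0 => x _; rewrite mulr_le0_ge0 ?prob_on_ge0. Qed.

Lemma gme_on_dcatprob S w rho i l : i \notin S ->
  gme_on S (fun x => w x * dcatprob l (x i)) rho =
  gme_on S (fun x => (x i == ord0)%:R * (w (pt_set x i (lift ord0 l)) - w x)) rho.
Proof.
move=> iS; rewrite /gme_on.
transitivity (\sum_(x : pt | x i == lift ord0 l) w x * prob_on S rho x -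
              \sum_(x : pt | x i == ord0) w x * prob_on S rho x).
  rewrite !(big_mkcond (fun x : pt => x i == _)) -sumrB.
  apply: eq_bigr => x _; rewrite /dcatprob.
  by case: (x i == _); case: (x i == _); rewrite /= ?mulr1n ?mulr0n; ring.
rewrite (sum_pt_set _ _ ord0) -sumrB big_mkcond; apply: eq_bigr => x _.
by rewrite prob_on_pt_set // mulr_natl mulrb; case: ifP; rewrite ?mulrBl ?mul0r.
Qed.

Lemma gme_on_dcatprob_ge0 S (f : pt -> R) rho i l :
  monotone_fn f -> in_simplex_n rho -> i \notin S ->
  0 <= gme_on S (fun x => f x * dcatprob l (x i)) rho.
Proof.
move=> mono hrho iS; rewrite gme_on_dcatprob //; apply: gme_on_ge0 => // x.
rewrite mulr_natl mulrb; case: eqP => // xi0.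
by rewrite subr_ge0; apply/mono/le_pt_set; rewrite xi0.
Qed.

Lemma gme_on_dcatprob2_le0 S (f : pt -> R) rho i i' j l :
  integer_submodular f -> in_simplex_n rho -> i != i' -> i \notin S -> i' \notin S ->
  gme_on S (fun x => f x * dcatprob j (x i) * dcatprob l (x i')) rho <= 0.
Proof.
move=> hsub hrho ii' iS i'S.
pose g x := (x i' == ord0)%:R * (f (pt_set x i' (lift ord0 l)) - f x).
rewrite gme_on_dcatprob // (@eq_gme_on _ _ (fun x => g x * dcatprob j (x i))); last first.
  by move=> x; rewrite /g pt_set_neq //; ring.
rewrite gme_on_dcatprob //; apply: gme_on_le0 => // x.
rewrite /g pt_set_neq 1?eq_sym // !mulr_natl !mulrb.
have [xi0|//] := eqVneq (x i) ord0; have [xi'0|_] := eqVneq (x i') ord0; last by rewrite subrr.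
have le_xa : (x i <= lift ord0 j)%N by rewrite xi0.
have le_xb : (x i' <= lift ord0 l)%N by rewrite xi'0.
by have := submodular_square hsub ii' le_xa le_xb; lra.
Qed.

End MultilinearExtension.

Arguments dcatprob {R m}.

Theorem proposition1 (R : realType) (n k : nat) (hn : (1 <= n)%N) (hk : (2 <= k)%N)
  (f : lattice_pt n k -> R) (hsub : integer_submodular f) :
  (monotone_fn f ->
     forall rho : 'M[R]_(n, k.-1), in_simplex_n rho ->
     forall (i : 'I_n) (j : 'I_(k.-1)),
       0 <= 'D_(edir i j) (gme f) rho) /\
  (forall rho : 'M[R]_(n, k.-1), in_simplex_n rho ->
     forall (i i' : 'I_n) (j l : 'I_(k.-1)),
       'D_(edir i' l) ('D_(edir i j) (gme f)) rho <= 0).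
Proof.
case: k hk f hsub => [//|m] _ f hsub.
have dF i (j : 'I_m.+1.-1) rho :
    'D_(edir i j) (gme f) rho =
    gme_on ([set: 'I_n] :\ i) (fun x => f x * dcatprob j (x i)) rho.
  by rewrite gme_gme_on derive_gme_on_mem ?inE.
split=> [mono rho hrho i j | rho hrho i i' j l].
  by rewrite dF; apply: gme_on_dcatprob_ge0; rewrite // !inE eqxx.
rewrite (funext (dF i j)).
have [<-|ii'] := eqVneq i i'; first by rewrite derive_gme_on_notin // !inE eqxx.
rewrite derive_gme_on_mem; last by rewrite !inE andbT eq_sym.
by apply: gme_on_dcatprob2_le0; rewrite // !inE eqxx ?andbF ?andbT.
Qed.
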